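(* There exists a (necessarily discontinuous) map $f:[0,1]\to[0,1]$ such that the chain components poset $(\mathfrak{C}_f,\preceq)$ is order isomorphic to $([0,1)\cap\mathbb{Q},\le)$.
   Context: No regularity is assumed on maps. For a map $f:[0,1]\to[0,1]$ with the usual metric: an $\varepsilon$-chain from $x$ to $y$ is a finite sequence $x_0=x,\dots,x_n=y$, $n\ge1$, with $|f(x_i)-x_{i+1}|<\varepsilon$; $x\,\mathcal{C}\,y$ iff for every $\varepsilon>0$ there is an $\varepsilon$-chain from $x$ to $y$; $CR_f=\{x:x\,\mathcal{C}\,x\}$; $x\,E\,y$ iff $x\,\mathcal{C}\,y$ and $y\,\mathcal{C}\,x$; $\mathfrak{C}_f=CR_f/E$ is the set of chain components, partially ordered by $[x]\preceq[y]$ iff $y\,\mathcal{C}\,x$. *)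

From Stdlib Require Import Reals QArith Lra.
Open Scope R_scope.

Definition I01 (x : R) : Prop := 0 <= x <= 1.

(* a map f : [0,1] -> [0,1] is represented by f : R -> R mapping I01 into I01;
   values outside [0,1] are irrelevant since chains live in [0,1]. *)
Definition maps_I01 (f : R -> R) : Prop := forall x, I01 x -> I01 (f x).

Definition eps_chain (f : R -> R) (eps x y : R) : Prop :=
  exists (n : nat) (l : nat -> R),
    (1 <= n)%nat /\ l 0%nat = x /\ l n = y /\
    (forall i, (i <= n)%nat -> I01 (l i)) /\
    (forall i, (i < n)%nat -> Rabs (f (l i) - l (S i)) < eps).

Definition chain_rel (f : R -> R) (x y : R) : Prop :=
  forall eps, 0 < eps -> eps_chain f eps x y.

Definition CR (f : R -> R) (x : R) : Prop := I01 x /\ chain_rel f x x.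

Definition chainE (f : R -> R) (x y : R) : Prop :=
  chain_rel f x y /\ chain_rel f y x.

Definition component (f : R -> R) (x : R) : R -> Prop :=
  fun y => CR f y /\ chainE f y x.

Definition is_component (f : R -> R) (C : R -> Prop) : Prop :=
  exists x, CR f x /\ C = component f x.

(* [x] <= [y] iff y C x  (well defined on classes) *)
Definition comp_le (f : R -> R) (C D : R -> Prop) : Prop :=
  exists x y, C x /\ D y /\ chain_rel f y x.

Definition QI01 : Type :=
  { r : R | (exists q : Q, r = Q2R q) /\ 0 <= r < 1 }.

From Stdlib Require Import Reals QArith.
From Stdlib Require Import ZArith Lra Lia ClassicalEpsilon ProofIrrelevance.
From Coquelicot Require Import Coquelicot.
Open Scope R_scope.

(* Each rational r of [0,1) is placed at [place r], where [place] is a nondecreasing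
   sum of staircases t |-> ceil ((n+1) t) / (n+1) weighted by 2^-n; it jumps by at
   least [gap r] > 0 just after r, so the intervals [place r, place r + gap r) are
   pairwise disjoint.  The map fixes every [place r], sends points of the gap
   arbitrarily close to [place r] to [place s] for every s < r, and never sends a
   point below [place r + gap r] above [place r]; the rest of [0,1] goes to 0.
   Thus one can chain down from [place r] to [place s] exactly when s <= r, while an
   eps-chain whose first image lies below [place r] stays below [place r + eps]:
   the points [place r] are the only chain recurrent points, each alone in its class. *)

Definition ceil (x : R) : R := 1 - IZR (up (- x)).

Lemma ceil_IZR_up (x : R) : ceil x = IZR (1 - up (- x)).
Proof. unfold ceil. rewrite minus_IZR. reflexivity. Qed.

Lemma ceil_ge (x : R) : x <= ceil x.
Proof. unfold ceil. destruct (archimed (- x)). lra. Qed.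

Lemma ceil_lt (x : R) : ceil x < x + 1.
Proof. unfold ceil. destruct (archimed (- x)). lra. Qed.

Lemma IZR_lt_succ (a b : Z) : IZR a < IZR b -> IZR a + 1 <= IZR b.
Proof. intro H. apply lt_IZR in H. rewrite <- plus_IZR. apply IZR_le. lia. Qed.

Lemma ceil_mono (x y : R) : x <= y -> ceil x <= ceil y.
Proof.
  intro Hxy. destruct (Rle_or_lt (ceil x) (ceil y)) as [|Hlt]; [assumption|].
  rewrite !ceil_IZR_up in Hlt. apply IZR_lt_succ in Hlt. rewrite <- !ceil_IZR_up in Hlt.
  pose proof (ceil_ge y). pose proof (ceil_lt x). lra.
Qed.

Lemma ceil_IZR (z : Z) : ceil (IZR z) = IZR z.
Proof.
  unfold ceil. assert (E : up (- IZR z) = (- z + 1)%Z).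
  { symmetry. apply up_tech; rewrite ?plus_IZR, ?opp_IZR; lra. }
  rewrite E, plus_IZR, opp_IZR. lra.
Qed.

Lemma ceil_gt_IZR (z : Z) (x : R) : IZR z < x -> IZR z + 1 <= ceil x.
Proof. intro H. pose proof (ceil_ge x). rewrite ceil_IZR_up in *. apply IZR_lt_succ. lra. Qed.

Lemma Series_ge_term (a : nat -> R) (n : nat) :
  (forall k, 0 <= a k) -> ex_series a -> a n <= Series a.
Proof.
  intros Ha Hex.
  assert (Hsum : a n <= sum_f_R0 a n).
  { destruct n as [|n]; simpl; [lra|]. pose proof (cond_pos_sum a n Ha). lra. }
  apply (Rle_trans _ _ _ Hsum). apply sum_incr; [|assumption].
  apply is_series_Reals, Series_correct, Hex.
Qed.

Lemma INR_S_pos (n : nat) : 0 < INR (S n).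
Proof. apply lt_0_INR. lia. Qed.

Lemma half_pow_pos (n : nat) : 0 < (1/2)^n.
Proof. apply pow_lt. lra. Qed.

Lemma ex_series_half_pow : ex_series (fun n => (1/2)^n).
Proof. apply ex_series_geom. rewrite Rabs_pos_eq; lra. Qed.

Definition stair (n : nat) (t : R) : R := (1/2)^n * ceil (INR (S n) * t) / INR (S n).

Lemma stair_mono (n : nat) (t t' : R) : t <= t' -> stair n t <= stair n t'.
Proof.
  intro H. pose proof (INR_S_pos n). pose proof (half_pow_pos n). unfold stair, Rdiv.
  apply Rmult_le_compat_r; [left; apply Rinv_0_lt_compat; lra|].
  apply Rmult_le_compat_l; [lra|]. apply ceil_mono. nra.
Qed.

Lemma stair_0 (n : nat) : stair n 0 = 0.
Proof. unfold stair. rewrite Rmult_0_r. change 0 with (IZR 0). rewrite ceil_IZR. simpl. lra. Qed.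

Lemma stair_1 (n : nat) : stair n 1 = (1/2)^n.
Proof.
  unfold stair. pose proof (INR_S_pos n).
  rewrite Rmult_1_r, INR_IZR_INZ, ceil_IZR, <- INR_IZR_INZ. field. lra.
Qed.

Lemma stair_bounds (n : nat) (t : R) : 0 <= t <= 1 -> 0 <= stair n t <= (1/2)^n.
Proof.
  intro Ht. rewrite <- (stair_0 n), <- (stair_1 n). split; apply stair_mono; lra.
Qed.

Lemma ex_series_stair (t : R) : 0 <= t <= 1 -> ex_series (fun n => stair n t).
Proof.
  intro Ht. apply (@ex_series_le R_AbsRing R_CompleteNormedModule _ (fun n => (1/2)^n));
    [intro n|exact ex_series_half_pow]. change (norm (stair n t)) with (Rabs (stair n t)).
  destruct (stair_bounds n t Ht). rewrite Rabs_pos_eq; lra.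
Qed.

(* The jump is read off the staircase whose step is the denominator of q. *)
Lemma stair_jump (q : Q) (t : R) (n : nat) : S n = Pos.to_nat (Qden q) ->
  Q2R q < t -> (1/2)^n / INR (S n) <= stair n t - stair n (Q2R q).
Proof.
  intros Hn Ht. pose proof (INR_S_pos n). pose proof (half_pow_pos n).
  assert (Hden : INR (S n) = IZR (Z.pos (Qden q))).
  { rewrite Hn, INR_IZR_INZ. f_equal. apply positive_nat_Z. }
  assert (Hnum : INR (S n) * Q2R q = IZR (Qnum q)).
  { rewrite Hden. unfold Q2R. field. apply not_0_IZR. lia. }
  assert (Hstep : IZR (Qnum q) + 1 <= ceil (INR (S n) * t)).
  { apply ceil_gt_IZR. rewrite <- Hnum. nra. }
  unfold stair. rewrite Hnum, ceil_IZR.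
  replace ((1/2)^n * ceil (INR (S n) * t) / INR (S n) - (1/2)^n * IZR (Qnum q) / INR (S n))
    with ((1/2)^n / INR (S n) * (ceil (INR (S n) * t) - IZR (Qnum q))) by (field; lra).
  rewrite <- (Rmult_1_r ((1/2)^n / INR (S n))) at 1.
  apply Rmult_le_compat_l; [apply Rlt_le, Rdiv_lt_0_compat|]; lra.
Qed.

Definition place (t : R) : R := Series (fun n => stair n t) / 4.

Lemma place_mono (t t' : R) : 0 <= t -> t <= t' -> t' <= 1 -> place t <= place t'.
Proof.
  intros. unfold place. apply Rmult_le_compat_r; [lra|].
  apply Series_le; [|apply ex_series_stair; lra].
  intro n. split; [apply stair_bounds; lra | apply stair_mono; lra].
Qed.

Lemma place_0 : place 0 = 0.
Proof.
  unfold place. rewrite (Series_ext _ (fun _ => 0 * 0)) by (intro; rewrite stair_0; ring).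
  rewrite (Series_scal_l 0 (fun _ => 0)). lra.
Qed.

Lemma place_1 : place 1 = 1/2.
Proof.
  unfold place. rewrite (Series_ext _ (fun n => (1/2)^n)) by apply stair_1.
  rewrite Series_geom by (rewrite Rabs_pos_eq; lra). field.
Qed.

Lemma place_range (t : R) : 0 <= t <= 1 -> 0 <= place t <= 1/2.
Proof. intro Ht. rewrite <- place_0, <- place_1. split; apply place_mono; lra. Qed.

Definition rat01 (r : R) : Prop := (exists q : Q, r = Q2R q) /\ 0 <= r < 1.

Definition rat_of (r : R) : Q :=
  match excluded_middle_informative (exists q, r = Q2R q) with
  | left H => proj1_sig (constructive_indefinite_description _ H)
  | right _ => 0%Q
  end.

Lemma rat_of_spec (r : R) : (exists q, r = Q2R q) -> r = Q2R (rat_of r).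
Proof.
  intro H. unfold rat_of. destruct excluded_middle_informative as [H'|]; [|contradiction].
  destruct constructive_indefinite_description. assumption.
Qed.

Definition rat_index (r : R) : nat := pred (Pos.to_nat (Qden (rat_of r))).

Definition gap (r : R) : R := (1/2)^(rat_index r) / INR (S (rat_index r)) / 4.

Lemma gap_pos (r : R) : 0 < gap r.
Proof.
  unfold gap. pose proof (INR_S_pos (rat_index r)). pose proof (half_pow_pos (rat_index r)).
  apply Rdiv_lt_0_compat; [apply Rdiv_lt_0_compat|]; lra.
Qed.

Lemma place_jump (r t : R) : rat01 r -> r < t -> t <= 1 -> place r + gap r <= place t.
Proof.
  intros [Hq Hr] Hrt Ht. pose proof (rat_of_spec r Hq) as Er.
  assert (Hex : ex_series (fun k => stair k t - stair k r)).
  { exact (ex_series_minus _ _ (ex_series_stair t ltac:(lra)) (ex_series_stair r ltac:(lra))). }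
  assert (Hpos : forall k, 0 <= stair k t - stair k r).
  { intro k. pose proof (stair_mono k r t ltac:(lra)). lra. }
  pose proof (Series_ge_term _ (rat_index r) Hpos Hex) as Hterm.
  rewrite Series_minus in Hterm by (apply ex_series_stair; lra).
  pose proof (stair_jump (rat_of r) t (rat_index r)
    ltac:(apply Nat.succ_pred_pos, Pos2Nat.is_pos) ltac:(rewrite <- Er; lra)) as Hjump.
  rewrite <- Er in Hjump. unfold place, gap. lra.
Qed.

Lemma place_gap_le_half (r : R) : rat01 r -> place r + gap r <= 1/2.
Proof. intro H. rewrite <- place_1. apply place_jump; [assumption|destruct H; lra|lra]. Qed.

Definition in_gap (r z : R) : Prop := rat01 r /\ place r <= z < place r + gap r.

Lemma in_gap_unique (r r' z : R) : in_gap r z -> in_gap r' z -> r = r'.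
Proof.
  intros [Hr Hz] [Hr' Hz']. destruct (total_order_T r r') as [[Hlt|]|Hgt]; [|assumption|].
  - pose proof (place_jump r r' Hr Hlt ltac:(destruct Hr'; lra)). lra.
  - pose proof (place_jump r' r Hr' Hgt ltac:(destruct Hr; lra)). lra.
Qed.

Definition gap_value (r z : R) : R :=
  if Req_EM_T z (place r) then place r else place (r * frac_part (/ (z - place r))).

Definition chain_map (z : R) : R :=
  match excluded_middle_informative (exists r, in_gap r z) with
  | left H => gap_value (proj1_sig (constructive_indefinite_description _ H)) z
  | right _ => 0
  end.

Lemma chain_map_in_gap (r z : R) : in_gap r z -> chain_map z = gap_value r z.
Proof.
  intro H. unfold chain_map.
  destruct excluded_middle_informative as [Hin|Hout]; [|exfalso; exact (Hout (ex_intro _ r H))].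
  destruct constructive_indefinite_description as [r0 H0]. simpl.
  rewrite (in_gap_unique r0 r z H0 H). reflexivity.
Qed.

Lemma chain_map_out (z : R) : ~ (exists r, in_gap r z) -> chain_map z = 0.
Proof.
  intro H. unfold chain_map. destruct excluded_middle_informative; [contradiction|reflexivity].
Qed.

Lemma in_gap_place (r : R) : rat01 r -> in_gap r (place r).
Proof. intro H. pose proof (gap_pos r). split; [assumption|lra]. Qed.

Lemma chain_map_place (r : R) : rat01 r -> chain_map (place r) = place r.
Proof.
  intro H. rewrite (chain_map_in_gap r _ (in_gap_place r H)). unfold gap_value.
  destruct Req_EM_T; [reflexivity|contradiction].
Qed.

Lemma gap_value_place (r z : R) : 0 <= r -> exists t, 0 <= t <= r /\ gap_value r z = place t.
Proof.
  intro Hr. unfold gap_value. destruct Req_EM_T.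
  - exists r. split; [lra|reflexivity].
  - exists (r * frac_part (/ (z - place r))). split; [|reflexivity].
    destruct (base_fp (/ (z - place r))). split; nra.
Qed.

Lemma chain_map_range (z : R) : I01 (chain_map z).
Proof.
  unfold I01. destruct (classic (exists r, in_gap r z)) as [[r H]|H].
  - rewrite (chain_map_in_gap r z H). destruct H as [[_ Hr] _].
    destruct (gap_value_place r z ltac:(lra)) as [t [Ht ->]].
    pose proof (place_range t ltac:(lra)). lra.
  - rewrite chain_map_out by assumption. lra.
Qed.

Lemma chain_map_le_place (r z : R) : rat01 r -> z < place r + gap r -> chain_map z <= place r.
Proof.
  intros Hr Hz. destruct (classic (exists r, in_gap r z)) as [[r0 H]|H].
  - rewrite (chain_map_in_gap r0 z H). destruct H as [Hr0 Hz0].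
    assert (r0 <= r).
    { destruct (Rle_or_lt r0 r) as [|Hlt]; [assumption|].
      pose proof (place_jump r r0 Hr Hlt ltac:(destruct Hr0; lra)). lra. }
    destruct (gap_value_place r0 z ltac:(destruct Hr0; lra)) as [t [Ht ->]].
    apply place_mono; destruct Hr; lra.
  - rewrite chain_map_out by assumption. apply place_range. destruct Hr; lra.
Qed.

Lemma frac_part_INR_plus (N : nat) (x : R) : 0 <= x < 1 -> frac_part (INR N + x) = x.
Proof.
  intro Hx. unfold frac_part, Int_part.
  assert (E : up (INR N + x) = (Z.of_nat N + 1)%Z).
  { symmetry. apply up_tech; rewrite ?plus_IZR, <- INR_IZR_INZ; lra. }
  rewrite E, minus_IZR, plus_IZR, <- INR_IZR_INZ. lra.
Qed.

(* Choose 1 / (z - place r) = N + s / r with N large. *)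
Lemma chain_map_hits (r s d : R) : rat01 r -> 0 <= s < r -> 0 < d ->
  exists z, in_gap r z /\ z < place r + d /\ chain_map z = place s.
Proof.
  intros Hr Hs Hd.
  set (e := Rmin d (gap r)).
  assert (He : 0 < e) by (apply Rmin_glb_lt; [assumption|apply gap_pos]).
  destruct (INR_unbounded (/ e)) as [N HN].
  assert (Hsr : 0 <= s / r < 1).
  { split; [apply Rdiv_le_0_compat; lra|]. apply (Rmult_lt_reg_r r); [lra|].
    unfold Rdiv. rewrite Rmult_assoc, Rinv_l; lra. }
  set (w := INR N + s / r).
  assert (Hw : / e < w) by (unfold w; lra).
  pose proof (Rinv_0_lt_compat e He).
  assert (Hwe : / w < e).
  { rewrite <- (Rinv_inv e). apply Rinv_lt_contravar; [apply Rmult_lt_0_compat|]; lra. }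
  pose proof (Rinv_0_lt_compat w ltac:(lra)).
  assert (Hed : e <= d) by apply Rmin_l. assert (Heg : e <= gap r) by apply Rmin_r.
  exists (place r + / w).
  assert (Hgap : in_gap r (place r + / w)) by (split; [assumption|lra]).
  split; [assumption|split; [lra|]].
  rewrite (chain_map_in_gap r _ Hgap). unfold gap_value.
  destruct Req_EM_T; [lra|].
  replace (place r + / w - place r) with (/ w) by ring.
  rewrite Rinv_inv. unfold w. rewrite frac_part_INR_plus by assumption.
  f_equal. field. lra.
Qed.

Lemma eps_chain_one (F : R -> R) (eps x y : R) :
  I01 x -> I01 y -> Rabs (F x - y) < eps -> eps_chain F eps x y.
Proof.
  intros Hx Hy Hxy. exists 1%nat, (fun i => match i with 0%nat => x | _ => y end).
  split; [lia|]. split; [reflexivity|]. split; [reflexivity|]. split.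
  - intros [|i] _; assumption.
  - intros i Hi. replace i with 0%nat by lia. assumption.
Qed.

Lemma eps_chain_two (F : R -> R) (eps x z y : R) : I01 x -> I01 z -> I01 y ->
  Rabs (F x - z) < eps -> Rabs (F z - y) < eps -> eps_chain F eps x y.
Proof.
  intros Hx Hz Hy Hxz Hzy.
  exists 2%nat, (fun i => match i with 0%nat => x | 1%nat => z | _ => y end).
  split; [lia|]. split; [reflexivity|]. split; [reflexivity|]. split.
  - intros [|[|i]] _; assumption.
  - intros [|[|i]] Hi; [assumption|assumption|lia].
Qed.

Lemma eps_chain_below (F : R -> R) (c eps x y : R) :
  (forall z, z < c + eps -> F z <= c) -> F x <= c -> eps_chain F eps x y -> y < c + eps.
Proof.
  intros HF Hx [n [l [Hn [H0 [Hl [_ Hstep]]]]]].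
  assert (Hbelow : forall i, (i < n)%nat -> l (S i) < c + eps).
  { induction i as [|i IH]; intro Hi.
    - pose proof (Hstep 0%nat Hi) as H. rewrite H0 in H. apply Rabs_def2 in H. lra.
    - pose proof (Hstep (S i) Hi) as H. apply Rabs_def2 in H.
      pose proof (HF _ (IH ltac:(lia))). lra. }
  rewrite <- Hl. replace n with (S (pred n)) by lia. apply Hbelow. lia.
Qed.

Lemma not_chain_rel_above (r x y : R) : rat01 r ->
  chain_map x <= place r -> place r < y -> ~ chain_rel chain_map x y.
Proof.
  intros Hr Hx Hy Hxy.
  set (eps := Rmin (gap r) (y - place r)).
  assert (Hepsg : eps <= gap r) by apply Rmin_l.
  assert (Hepsy : eps <= y - place r) by apply Rmin_r.
  assert (Heps : 0 < eps) by (apply Rmin_glb_lt; [apply gap_pos|lra]).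
  assert (HF : forall z, z < place r + eps -> chain_map z <= place r).
  { intros z Hz. apply chain_map_le_place; [assumption|lra]. }
  pose proof (eps_chain_below _ _ _ _ _ HF Hx (Hxy eps Heps)). lra.
Qed.

Lemma place_I01 (r : R) : rat01 r -> I01 (place r).
Proof. intros [_ Hr]. pose proof (place_range r ltac:(lra)). unfold I01. lra. Qed.

Lemma chain_rel_place_down (r s : R) : rat01 r -> rat01 s -> s <= r ->
  chain_rel chain_map (place r) (place s).
Proof.
  intros Hr Hs Hsr eps Heps. destruct Hsr as [Hlt|<-].
  - destruct (chain_map_hits r s eps Hr ltac:(destruct Hs; lra) Heps) as [z [Hz [Hze Hfz]]].
    assert (Hz01 : I01 z).
    { destruct Hz as [_ Hz]. pose proof (place_gap_le_half r Hr).
      pose proof (place_I01 r Hr). unfold I01 in *. lra. }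
    apply (eps_chain_two _ _ _ z); try apply place_I01; try assumption.
    + rewrite chain_map_place by assumption. destruct Hz as [_ Hz]. rewrite Rabs_left1; lra.
    + rewrite Hfz, Rminus_diag, Rabs_R0. assumption.
  - apply eps_chain_one; try apply place_I01; try assumption.
    rewrite chain_map_place, Rminus_diag, Rabs_R0 by assumption. assumption.
Qed.

Lemma not_chain_rel_place_up (r s : R) : rat01 r -> rat01 s -> r < s ->
  ~ chain_rel chain_map (place r) (place s).
Proof.
  intros Hr Hs Hrs. apply not_chain_rel_above with r; [assumption| |].
  - rewrite chain_map_place by assumption. lra.
  - pose proof (place_jump r s Hr Hrs ltac:(destruct Hs; lra)). pose proof (gap_pos r). lra.
Qed.

Lemma rat01_0 : rat01 0.
Proof. split; [exists 0%Q; unfold Q2R; simpl; ring | lra]. Qed.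

Lemma place_or_below (y : R) : I01 y ->
  (exists r, rat01 r /\ y = place r) \/ (exists r, rat01 r /\ chain_map y <= place r < y).
Proof.
  intro Hy. destruct (classic (exists r, in_gap r y)) as [[r Hg]|Hout].
  - destruct (Req_dec y (place r)) as [E|E]; [left; exists r; split; [apply Hg|assumption]|].
    right. exists r. destruct Hg as [Hr Hg]. split; [assumption|split; [|lra]].
    apply chain_map_le_place; [assumption|lra].
  - right. exists 0. split; [exact rat01_0|]. rewrite chain_map_out, place_0 by assumption.
    split; [lra|]. destruct Hy as [[Hpos|Hzero] _]; [assumption|subst y].
    exfalso. apply Hout. exists 0. rewrite <- place_0 at 2. apply in_gap_place, rat01_0.
Qed.

Lemma CR_place (r : R) : rat01 r -> CR chain_map (place r).
Proof. intro H. split; [apply place_I01|apply chain_rel_place_down; try lra]; assumption. Qed.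

Lemma CR_is_place (y : R) : CR chain_map y -> exists r, rat01 r /\ y = place r.
Proof.
  intros [Hy Hyy]. destruct (place_or_below y Hy) as [|[r [Hr [Hfy Hry]]]]; [assumption|].
  exfalso. exact (not_chain_rel_above r y y Hr Hfy Hry Hyy).
Qed.

Lemma chainE_place_inj (r s : R) : rat01 r -> rat01 s ->
  chainE chain_map (place r) (place s) -> r = s.
Proof.
  intros Hr Hs [Hrs Hsr]. destruct (total_order_T r s) as [[Hlt|]|Hgt]; [|assumption|].
  - exfalso. exact (not_chain_rel_place_up r s Hr Hs Hlt Hrs).
  - exfalso. exact (not_chain_rel_place_up s r Hs Hr Hgt Hsr).
Qed.

Lemma component_place_self (r : R) : rat01 r -> component chain_map (place r) (place r).
Proof.
  intro H. split; [apply CR_place, H|].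
  split; apply chain_rel_place_down; try lra; assumption.
Qed.

Lemma component_place_eq (r x : R) : rat01 r -> component chain_map (place r) x -> x = place r.
Proof.
  intros Hr [Hx HE]. destruct (CR_is_place x Hx) as [s [Hs ->]].
  rewrite (chainE_place_inj s r Hs Hr HE). reflexivity.
Qed.

Theorem theorem3p2 :
  exists f : R -> R, maps_I01 f /\
    exists phi : QI01 -> (R -> Prop),
      (forall q, is_component f (phi q)) /\
      (forall C, is_component f C -> exists q, phi q = C) /\
      (forall q r, phi q = phi r -> q = r) /\
      (forall q r, proj1_sig q <= proj1_sig r <-> comp_le f (phi q) (phi r)).
Proof.
  exists chain_map. split; [intros x _; apply chain_map_range|].
  exists (fun q => component chain_map (place (proj1_sig q))).
  split; [|split; [|split]].
  - intros [q Hq]. exists (place q). split; [apply CR_place, Hq|reflexivity].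
  - intros C [x [Hx ->]]. destruct (CR_is_place x Hx) as [r [Hr ->]].
    exists (exist _ r Hr). reflexivity.
  - intros [q Hq] [r Hr] Heq. simpl in Heq.
    pose proof (component_place_self q Hq) as Hself. rewrite Heq in Hself.
    pose proof (chainE_place_inj q r Hq Hr (proj2 Hself)) as <-.
    f_equal. apply proof_irrelevance.
  - intros [q Hq] [r Hr]. simpl. split.
    + intro Hqr. exists (place q), (place r).
      repeat split; try apply component_place_self; try assumption.
      apply chain_rel_place_down; assumption.
    + intros [x [y [Hx [Hy Hyx]]]].
      rewrite (component_place_eq q x Hq Hx), (component_place_eq r y Hr Hy) in Hyx.
      destruct (Rle_or_lt q r) as [|Hlt]; [assumption|].
      exfalso. exact (not_chain_rel_place_up r q Hr Hq Hlt Hyx).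
Qed.
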